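(* Let $\mathcal{X}$ be a $d$-dimensional manifold with volume form $V$, $G$ a probability measure on $\mathcal{X}$ with density $g$ w.r.t. $V$, $\mathcal{Y}\subset\mathbb{R}$ with measure $\mu$ (Lebesgue or counting), and $\nu=V\times\mu$. For a latent function $f:\mathcal{X}\to\mathbb{R}$ let $\pi_f(x,y)=\pi_f(y\mid x)g(x)$, where $\pi_f(y\mid x)=h(y)\exp\{\theta(x)\kappa(y)-J(\theta(x))\}$ is a one-parameter canonical exponential family with $\theta=\zeta\circ f$. Assume $J\in C^2(\mathbb{R})$, the family is minimal with $J'$ invertible, $\varphi=J'\circ\theta=l\circ f$ for a link function $l$, $\zeta=(J')^{-1}\circ l$, and $l,\zeta$ are continuously differentiable with uniformly bounded derivatives. Then: 1. If $f_1,f_2$ take values in a bounded set $\Omega\subset\mathbb{R}$, there exist positive constants $C_4(\Omega),C_5(\Omega)$ such that $\mathrm{KL}(\pi_{f_1};\pi_{f_2})\le C_4(\Omega)\|f_1-f_2\|_\infty^2$ and $V_{2,0}(\pi_{f_1};\pi_{f_2})\le C_5(\Omega)\|f_1-f_2\|_\infty^2$. 2. There exists a uniform constant $C_6$ such that $d_H^2(\pi_{f_1},\pi_{f_2})\le C_6\|f_1-f_2\|_\infty^2$.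
   Context: $h\ge0$, $\kappa$ are functions of $y$ and $J(\theta)=\log\int_{\mathcal{Y}}h(y)e^{\theta\kappa(y)}d\mu(y)$. $\mathrm{KL}(\pi_{f_1};\pi_{f_2})=\mathbb{E}_{\pi_{f_1}}\log(\pi_{f_1}/\pi_{f_2})$; $V_{2,0}(\pi_{f_1};\pi_{f_2})=\mathbb{E}_{\pi_{f_1}}|\log(\pi_{f_1}/\pi_{f_2})-\mathrm{KL}(\pi_{f_1};\pi_{f_2})|^2$; $d_H(\pi_{f_1},\pi_{f_2})=\{\int(\sqrt{\pi_{f_1}}-\sqrt{\pi_{f_2}})^2d\nu\}^{1/2}$; $\|f\|_\infty=\sup_x|f(x)|$. *)

From HB Require Import structures.
From mathcomp Require Import all_boot all_order all_algebra.
From mathcomp Require Import all_classical all_reals all_analysis.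
Import Order.TTheory GRing.Theory Num.Theory.
Import numFieldNormedType.Exports.
Set Implicit Arguments. Unset Strict Implicit. Unset Printing Implicit Defensive.
Local Open Scope classical_set_scope.
Local Open Scope ring_scope.

Section Defs.
Context {R : realType}.

Definition Jfun (mu : {measure set (measurableTypeR R) -> \bar R}) (Y : set R)
  (h kappa : R -> R) (t : R) : R :=
  ln (fine (\int[mu]_(y in Y) (h y * expR (t * kappa y))%:E)).

Definition minimal_family (mu : {measure set (measurableTypeR R) -> \bar R})
  (Y : set R) (h kappa : R -> R) : Prop :=
  forall a b : R,
    mu.-negligible (Y `&` [set y | h y != 0 /\ a * kappa y != b]) -> a = 0.

Context {d : measure_display} {X : measurableType d}.

Definition pi_f (g : X -> R) (h kappa J zeta : R -> R) (f : X -> R)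
  (x : X) (y : R) : R :=
  h y * expR (zeta (f x) * kappa y - J (zeta (f x))) * g x.

(* integral w.r.t. nu = V x mu over X x Y (iterated) *)
Definition nu_int (V : {measure set X -> \bar R})
  (mu : {measure set (measurableTypeR R) -> \bar R}) (Y : set R)
  (F : X -> R -> \bar R) : \bar R :=
  (\int[V]_x \int[mu]_(y in Y) F x y)%E.

Definition KLdiv V mu Y (p1 p2 : X -> R -> R) : \bar R :=
  nu_int V mu Y (fun x y => (p1 x y * ln (p1 x y / p2 x y))%:E).

Definition V20 V mu Y (p1 p2 : X -> R -> R) : \bar R :=
  nu_int V mu Y (fun x y =>
    (p1 x y * `|ln (p1 x y / p2 x y) - fine (KLdiv V mu Y p1 p2)| ^+ 2)%:E).

Definition hellinger2 V mu Y (p1 p2 : X -> R -> R) : \bar R :=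
  nu_int V mu Y (fun x y => ((Num.sqrt (p1 x y) - Num.sqrt (p2 x y)) ^+ 2)%:E).

Definition supnorm (f1 f2 : X -> R) : \bar R :=
  ereal_sup (range (fun x => (`|f1 x - f2 x|)%:E)).

End Defs.

(* Write p_t(y) = h(y) exp(t kappa(y) - J(t)), so that pi_f(x, y) = g(x) p_t(y)
   with t = zeta(f(x)).  Fix x and put t1 = zeta(f1 x), t2 = zeta(f2 x).  The
   log-ratio of p_t1 and p_t2 is affine in kappa, so each integrand in y is
   bounded pointwise by a linear combination of densities p_t with
   t in {t1, t2, 2 t1 - t2, (t1 + t2) / 2}, whose integrals are the
   coefficients.  This gives
     KL in y      <= exp(J(2 t1 - t2) - 2 J(t1) + J(t2)) - 1,
     d_H^2 in y   <= |J(t1) + J(t2) - 2 J((t1 + t2) / 2)|,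
   and V_{2,0} in y is handled the same way via u^2 <= 4 (e^u + e^-u - 2).
   Both second differences of J are O(|f1 x - f2 x|^2).  For the first, J'' is
   bounded on the compact image of Omega under zeta, and zeta is Lipschitz.  The
   second bound is uniform because J' o zeta = l: by the intermediate value
   theorem, J' varies by at most sup |l'| |f1 x - f2 x| between t1 and t2.
   Integrating in x against the probability density g gives the result. *)

From HB Require Import structures.
From mathcomp Require Import all_boot all_order all_algebra.
From mathcomp Require Import all_classical all_reals all_analysis.
From mathcomp Require Import measurable_realfun ring lra.
Import Order.TTheory GRing.Theory Num.Theory.
Import numFieldNormedType.Exports.
Local Open Scope classical_set_scope.
Local Open Scope ring_scope.

Section integral_le_nonmeasurable.
Local Set Implicit Arguments.
Local Unset Strict Implicit.
Context {d : measure_display} {T : measurableType d} {R : realType}.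
Variable mu : {measure set T -> \bar R}.
Local Open Scope ereal_scope.

(* No measurability is needed: the integral of a nonnegative function is a
   supremum over the simple functions below it. *)
Lemma ge0_le_integral_any (D : set T) (f g : T -> \bar R) :
  (forall x, D x -> 0 <= f x) -> (forall x, D x -> f x <= g x) ->
  \int[mu]_(x in D) f x <= \int[mu]_(x in D) g x.
Proof.
move=> f0 fg.
have g0 x : D x -> 0 <= g x by move=> Dx; exact: le_trans (f0 _ Dx) (fg _ Dx).
rewrite !ge0_integralE//; apply: ereal_sup_le => _ [s sf <-]; exists s => //= x.
apply: le_trans (sf x) _; exact: lee_restrict.
Qed.

Lemma le_integral_any (D : set T) (f g : T -> \bar R) :
  (forall x, D x -> f x <= g x) ->
  \int[mu]_(x in D) f x <= \int[mu]_(x in D) g x.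
Proof.
move=> fg; rewrite integralE [leRHS]integralE leeB//.
- apply: ge0_le_integral_any => x Dx; first exact: funepos_ge0.
  by apply: (funepos_le (D := D)); [move=> y /set_mem /fg|exact: mem_set].
- apply: ge0_le_integral_any => x Dx; first exact: funeneg_ge0.
  by apply: (funeneg_le (D := D)); [move=> y /set_mem /fg|exact: mem_set].
Qed.

End integral_le_nonmeasurable.

Section real_analysis.
Local Set Implicit Arguments.
Local Unset Strict Implicit.
Context {R : realType}.
Implicit Types (f F : R -> R) (a b c e u v x K L : R).

Lemma MVT_segment_derive1 f u v : (forall x, derivable f x 1) -> u <= v ->
  exists2 c, u <= c <= v & f v - f u = derive1 f c * (v - u).
Proof.
move=> df uv.
have dfE x : x \in `]u, v[ -> is_derive x 1 f (derive1 f x).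
  by move=> _; rewrite derive1E; exact: derivableP.
have [c] := MVT_segment uv dfE (derivable_within_continuous (fun x _ => df x)).
by rewrite in_itv /=; exists c.
Qed.

Lemma lipschitz_on_segment f a b L u v : (forall x, derivable f x 1) ->
  (forall x, a <= x <= b -> `|derive1 f x| <= L) ->
  a <= u <= b -> a <= v <= b -> `|f u - f v| <= L * `|u - v|.
Proof.
move=> df fL; wlog uv : u v / u <= v.
  move=> W au av; have [/W|/ltW/W] := leP u v; first exact.
  by rewrite distrC [`|u - v|]distrC; apply.
move=> /andP[au _] /andP[_ vb].
rewrite distrC [`|u - v|]distrC.
have [c /andP[uc cv] ->] := MVT_segment_derive1 df uv.
rewrite normrM ler_wpM2r// fL//.
by rewrite (le_trans au uc) (le_trans cv vb).
Qed.

Lemma lipschitz_derive1_bounded f L : (forall x, derivable f x 1) ->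
  (forall x, `|derive1 f x| <= L) -> forall u v, `|f u - f v| <= L * `|u - v|.
Proof.
move=> df fL u v; apply: (lipschitz_on_segment (a := Num.min u v) (b := Num.max u v)) => //.
- by rewrite ge_min le_max !lexx ?orbT.
- by rewrite ge_min le_max !lexx ?orbT.
Qed.

Lemma bounded_on_segment F b : continuous F -> 0 <= b ->
  exists C, 0 <= C /\ forall x, - b <= x <= b -> `|F x| <= C.
Proof.
move=> cF b0.
have [c _ Hc] := @EVT_max R (fun x => `|F x|) (- b) b ltac:(lra)
  (continuous_subspaceT (fun x => continuous_comp (cF x) (@norm_continuous _ _ _))).
by exists `|F c|; split => // x xb; apply: Hc; rewrite in_itv.
Qed.

Lemma second_difference_le_pos F c e K : (forall x, derivable F x 1) -> 0 < e ->
  (forall u v, c - e <= u <= c + e -> c - e <= v <= c + e ->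
     `|derive1 F u - derive1 F v| <= K) ->
  `|F (c + e) + F (c - e) - 2 * F c| <= K * e.
Proof.
move=> dF e0 FK.
have ce1 : c <= c + e by rewrite lerDl ltW.
have ce2 : c - e <= c by rewrite lerBlDr lerDl ltW.
have [u /andP[cu uc] Eu] := MVT_segment_derive1 dF ce1.
have [v /andP[cv vc] Ev] := MVT_segment_derive1 dF ce2.
have -> : F (c + e) + F (c - e) - 2 * F c = (F (c + e) - F c) - (F c - F (c - e)) by ring.
rewrite Eu Ev addrAC subrr add0r opprB addrCA subrr addr0.
rewrite -mulrBl normrM (gtr0_norm e0) ler_pM2r//.
by apply: FK; apply/andP; split; lra.
Qed.

Lemma second_difference_le F c e K : (forall x, derivable F x 1) ->
  (forall u v, c - `|e| <= u <= c + `|e| -> c - `|e| <= v <= c + `|e| ->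
     `|derive1 F u - derive1 F v| <= K) ->
  `|F (c + e) + F (c - e) - 2 * F c| <= K * `|e|.
Proof.
move=> dF; have [e0|e0|->] := ltgtP e 0.
- rewrite ltr0_norm// => FK.
  have ne0 : 0 < - e by rewrite oppr_gt0.
  by have := second_difference_le_pos dF ne0 FK; rewrite opprK [F (c - e) + _]addrC.
- by rewrite gtr0_norm//; exact: second_difference_le_pos.
- by rewrite normr0 mulr0 addr0 subr0 (_ : F c + F c - 2 * F c = 0) ?normr0//; ring.
Qed.

Lemma expR_sub1_le_norm e L : `|e| <= L -> expR e - 1 <= `|e| * expR L.
Proof.
move=> eL.
have e_ge := expR_ge1Dx (- `|e|).
have eN : expR `|e| * expR (- `|e|) = 1 by rewrite -expRD subrr expR0.
have e1 : expR `|e| - 1 <= `|e| * expR `|e|.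
  have := expR_gt0 `|e|.
  have : expR `|e| * (1 - `|e|) <= expR `|e| * expR (- `|e|) by rewrite ler_wpM2l ?expR_ge0.
  rewrite eN; nra.
have : expR e <= expR `|e| by rewrite ler_expR ler_norm.
have : `|e| * expR `|e| <= `|e| * expR L by rewrite ler_wpM2l// ler_expR.
lra.
Qed.

Lemma sqr_le_expR_expRN u : u ^+ 2 <= 4 * (expR u + expR (- u) - 2).
Proof.
wlog u0 : u / 0 <= u.
  move=> W; have [/W//|u0] := leP 0 u.
  by have := W (- u); rewrite oppr_ge0 opprK sqrrN => /(_ (ltW u0)); lra.
have e2 : expR u = expR (u / 2) ^+ 2 by rewrite -expRM_natl; congr expR; lra.
have : (1 + u / 2) ^+ 2 <= expR (u / 2) ^+ 2.
  by rewrite ler_sqr ?nnegrE ?expR_ge0//; have := expR_ge1Dx (u / 2); lra.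
have := expR_ge1Dx (- u); rewrite e2; nra.
Qed.

End real_analysis.

Section integrands.
Local Set Implicit Arguments.
Local Unset Strict Implicit.
Context {R : realType}.
Implicit Types a K : R.

Lemma ln_ratio_expR a e1 e2 : 0 < a -> ln (a * expR e1 / (a * expR e2)) = e1 - e2.
Proof.
by move=> a0; rewrite invfM mulrACA mulfV ?gt_eqF// mul1r -expRN -expRD expRK.
Qed.

Lemma kl_integrand_le a e1 e2 : 0 <= a ->
  a * expR e1 * ln (a * expR e1 / (a * expR e2)) <=
  a * expR (2 * e1 - e2) - a * expR e1.
Proof.
rewrite le_eqVlt => /predU1P[<-|a0]; first by rewrite !mul0r subrr.
rewrite ln_ratio_expR// (_ : expR (2 * e1 - e2) = expR e1 * expR (e1 - e2)).
  have := expR_ge1Dx (e1 - e2); have : 0 < a * expR e1 by rewrite mulr_gt0 ?expR_gt0.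
  nra.
by rewrite -expRD; congr expR; ring.
Qed.

Lemma kl_integrand_ge a e1 e2 : 0 <= a ->
  a * expR e1 - a * expR e2 <= a * expR e1 * ln (a * expR e1 / (a * expR e2)).
Proof.
rewrite le_eqVlt => /predU1P[<-|a0]; first by rewrite !mul0r subrr.
rewrite ln_ratio_expR// (_ : expR e2 = expR e1 * expR (- (e1 - e2))).
  have := expR_ge1Dx (- (e1 - e2)); have : 0 < a * expR e1 by rewrite mulr_gt0 ?expR_gt0.
  nra.
by rewrite -expRD; congr expR; ring.
Qed.

Lemma v20_integrand_le a e1 e2 K : 0 <= a ->
  a * expR e1 * `|ln (a * expR e1 / (a * expR e2)) - K| ^+ 2 <=
  8 * (a * expR (2 * e1 - e2)) + 8 * (a * expR e2) + (2 * K ^+ 2 - 16) * (a * expR e1).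
Proof.
rewrite le_eqVlt => /predU1P[<-|a0]; first by rewrite !mul0r !mulr0; lra.
rewrite ln_ratio_expR// real_normK ?num_real//.
have expR_shift e : expR e = expR e1 * expR (e - e1) by rewrite -expRD; congr expR; ring.
rewrite (expR_shift (2 * e1 - e2)) (expR_shift e2).
have -> : 2 * e1 - e2 - e1 = e1 - e2 by ring.
have -> : e2 - e1 = - (e1 - e2) by ring.
set u := e1 - e2.
have ae1 : 0 < a * expR e1 by rewrite mulr_gt0 ?expR_gt0.
have uK : (u - K) ^+ 2 <= 8 * expR u + 8 * expR (- u) + 2 * K ^+ 2 - 16.
  by have := sqr_le_expR_expRN u; have := sqr_ge0 (u + K); lra.
have -> : 8 * (a * (expR e1 * expR u)) + 8 * (a * (expR e1 * expR (- u))) +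
    (2 * K ^+ 2 - 16) * (a * expR e1) =
  a * expR e1 * (8 * expR u + 8 * expR (- u) + 2 * K ^+ 2 - 16) by ring.
by rewrite ler_pM2l.
Qed.

Lemma hellinger_integrand_eq a e1 e2 : 0 <= a ->
  (Num.sqrt (a * expR e1) - Num.sqrt (a * expR e2)) ^+ 2 =
  a * expR e1 + a * expR e2 - 2 * (a * expR ((e1 + e2) / 2)).
Proof.
have expR_half (e : R) : expR e = expR (e / 2) ^+ 2.
  by rewrite -expRM_natl; congr expR; lra.
move=> a0; rewrite !sqrtrM// (expR_half e1) (expR_half e2) !sqrtr_sqr.
rewrite !gtr0_norm ?expR_gt0// (_ : (e1 + e2) / 2 = e1 / 2 + e2 / 2) ?expRD; last lra.
by rewrite -[in RHS](sqr_sqrtr a0); ring.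
Qed.

End integrands.

Definition expfam_density {R : realType} {T : Type} (h kappa : T -> R) (J : R -> R)
  (t : R) (y : T) : R :=
  h y * expR (t * kappa y - J t).

Section exponential_family.
Local Set Implicit Arguments.
Local Unset Strict Implicit.
Context {R : realType}.
Variables (Y : set R) (mu : {measure set (measurableTypeR R) -> \bar R}).
Variables (h kappa : R -> R).
Hypotheses (mY : measurable (Y : set (measurableTypeR R))) (mh : measurable_fun Y h)
  (mkappa : measurable_fun Y kappa) (h_ge0 : forall y, Y y -> 0 <= h y)
  (partition_fin : forall t : R,
    (0 < \int[mu]_(y in Y) (h y * expR (t * kappa y))%:E < +oo)%E).
Local Notation J := (Jfun mu Y h kappa).
Local Notation p := (expfam_density h kappa J).

Lemma integral_kernel t :
  (\int[mu]_(y in Y) (h y * expR (t * kappa y))%:E)%E = (expR (J t))%:E.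
Proof.
have /andP[Z0 Zfin] := partition_fin t.
have Zfin_num : (\int[mu]_(y in Y) (h y * expR (t * kappa y))%:E)%E \is a fin_num.
  by rewrite ge0_fin_numE// ltW.
by rewrite /Jfun lnK ?fineK// posrE -lte_fin fineK.
Qed.

Lemma integrable_kernel t :
  mu.-integrable Y (EFin \o (fun y => h y * expR (t * kappa y))).
Proof.
apply/integrableP; split.
  apply/measurable_EFinP; apply: measurable_funM => //.
  by apply: measurableT_comp => //; exact: measurable_funM.
under eq_integral => y /set_mem Yy do
  rewrite /= ger0_norm ?mulr_ge0 ?h_ge0 ?expR_ge0//.
by case/andP: (partition_fin t).
Qed.

Lemma expfam_densityE t y : p t y = expR (- J t) * (h y * expR (t * kappa y)).
Proof. by rewrite /expfam_density [t * _ - _]addrC expRD mulrCA. Qed.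

Lemma integrable_expfam_density t : mu.-integrable Y (EFin \o p t).
Proof.
apply: (eq_integrable mY _ _ _ (integrableZl mY (expR (- J t)) (integrable_kernel t))).
by move=> y _; rewrite /= expfam_densityE EFinM.
Qed.

Lemma integral_expfam_density t : (\int[mu]_(y in Y) (p t y)%:E)%E = 1%E.
Proof.
under eq_integral => y _ do rewrite expfam_densityE EFinM.
rewrite integralZl// ?integral_kernel -?EFinM ?expRN ?mulVf ?gt_eqF ?expR_gt0//.
exact: integrable_kernel.
Qed.

End exponential_family.

Section normalized_family.
Local Set Implicit Arguments.
Local Unset Strict Implicit.
Context {d : measure_display} {T : measurableType d} {R : realType}.
Variables (mu : {measure set T -> \bar R}) (Y : set T).
Variables (h kappa : T -> R) (J : R -> R).
Local Notation p := (expfam_density h kappa J).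
Hypotheses (mY : measurable Y) (h_ge0 : forall y, Y y -> 0 <= h y)
  (integrable_p : forall t, mu.-integrable Y (EFin \o p t))
  (integral_p : forall t, (\int[mu]_(y in Y) (p t y)%:E)%E = 1%E).

Lemma integral_expfam_mixture (s : seq (R * R)) :
  (\int[mu]_(y in Y) (\sum_(ct <- s) ct.1 * p ct.2 y)%:E)%E = (\sum_(ct <- s) ct.1)%:E.
Proof.
have integrableZ ct : mu.-integrable Y (fun y => (ct.1 * p ct.2 y)%:E).
  apply: (eq_integrable mY _ _ _ (integrableZl mY ct.1 (integrable_p ct.2))).
  by move=> y _; rewrite EFinM.
rewrite (eq_integral (fun y => \sum_(ct <- s) (ct.1 * p ct.2 y)%:E)); last first.
  by move=> y _; rewrite sumEFin.
rewrite integral_sum// -sumEFin; apply: eq_bigr => ct _.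
rewrite (eq_integral (fun y => (ct.1)%:E * (p ct.2 y)%:E)%E); last first.
  by move=> y _; rewrite EFinM.
by rewrite integralZl// ?integral_p ?mule1//; exact: integrable_p.
Qed.

Lemma expfam_densityMr (t : R) (y : T) (G : R) :
  p t y * G = h y * G * expR (t * kappa y - J t).
Proof. by rewrite /expfam_density mulrAC. Qed.

Lemma expfam_density_shift (t s : R) (y : T) (G : R) :
  h y * G * expR (t * kappa y - s) = G * expR (J t - s) * p t y.
Proof.
rewrite /expfam_density (_ : t * kappa y - s = (J t - s) + (t * kappa y - J t)); last by ring.
by rewrite expRD; ring.
Qed.

Local Open Scope ereal_scope.

Lemma le_integral_mixture (F : T -> R) (s : seq (R * R)) :
  (forall y, Y y -> F y <= \sum_(ct <- s) ct.1 * p ct.2 y)%R ->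
  \int[mu]_(y in Y) (F y)%:E <= (\sum_(ct <- s) ct.1)%:E.
Proof.
move=> Fs; rewrite -integral_expfam_mixture.
by apply: le_integral_any => y Yy; rewrite lee_fin Fs.
Qed.

Lemma ge_integral_mixture (F : T -> R) (s : seq (R * R)) :
  (forall y, Y y -> \sum_(ct <- s) ct.1 * p ct.2 y <= F y)%R ->
  (\sum_(ct <- s) ct.1)%:E <= \int[mu]_(y in Y) (F y)%:E.
Proof.
move=> Fs; rewrite -integral_expfam_mixture.
by apply: le_integral_any => y Yy; rewrite lee_fin Fs.
Qed.

Lemma kl_expfam_le (t1 t2 G : R) : (0 <= G)%R ->
  \int[mu]_(y in Y) (p t1 y * G * ln (p t1 y * G / (p t2 y * G)))%:E <=
  (G * (expR (J (2 * t1 - t2) - 2 * J t1 + J t2) - 1))%:E.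
Proof.
move=> G0; set D := (J (2 * t1 - t2) - 2 * J t1 + J t2)%R.
apply: le_trans (le_integral_mixture (s := [:: (G * expR D, 2 * t1 - t2); (- G, t1)]%R) _) _.
  move=> y Yy; rewrite !big_cons big_nil /= !expfam_densityMr.
  apply: le_trans (kl_integrand_le _ _ (mulr_ge0 (h_ge0 Yy) G0)) _.
  have -> : (2 * (t1 * kappa y - J t1) - (t2 * kappa y - J t2) =
             (2 * t1 - t2) * kappa y - (2 * J t1 - J t2))%R by ring.
  rewrite (expfam_density_shift (2 * t1 - t2)) -expfam_densityMr.
  rewrite (_ : J (2 * t1 - t2) - _ = D)%R; last by rewrite /D; ring.
  lra.
by rewrite !big_cons big_nil /= lee_fin; lra.
Qed.

Lemma kl_expfam_ge0 (t1 t2 G : R) : (0 <= G)%R ->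
  0 <= \int[mu]_(y in Y) (p t1 y * G * ln (p t1 y * G / (p t2 y * G)))%:E.
Proof.
move=> G0.
apply: le_trans _ (ge_integral_mixture (s := [:: (G, t1); (- G, t2)]%R) _).
  by rewrite !big_cons big_nil /= lee_fin; lra.
move=> y Yy; rewrite !big_cons big_nil /= !expfam_densityMr.
apply: le_trans _ (kl_integrand_ge _ _ (mulr_ge0 (h_ge0 Yy) G0)).
rewrite -!expfam_densityMr; lra.
Qed.

Lemma v20_expfam_le (t1 t2 G K : R) : (0 <= G)%R ->
  \int[mu]_(y in Y) (p t1 y * G * `|ln (p t1 y * G / (p t2 y * G)) - K| ^+ 2)%:E <=
  (G * (8 * (expR (J (2 * t1 - t2) - 2 * J t1 + J t2) - 1) + 2 * K ^+ 2))%:E.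
Proof.
move=> G0; set D := (J (2 * t1 - t2) - 2 * J t1 + J t2)%R.
pose s := [:: (8 * (G * expR D), 2 * t1 - t2); (8 * G, t2);
              ((2 * K ^+ 2 - 16) * G, t1)]%R.
apply: le_trans (le_integral_mixture (s := s) _) _.
  move=> y Yy; rewrite /s !big_cons big_nil /= !expfam_densityMr.
  apply: le_trans (v20_integrand_le _ _ K (mulr_ge0 (h_ge0 Yy) G0)) _.
  have -> : (2 * (t1 * kappa y - J t1) - (t2 * kappa y - J t2) =
             (2 * t1 - t2) * kappa y - (2 * J t1 - J t2))%R by ring.
  rewrite (expfam_density_shift (2 * t1 - t2)) -!expfam_densityMr.
  rewrite (_ : J (2 * t1 - t2) - _ = D)%R; last by rewrite /D; ring.
  lra.
by rewrite /s !big_cons big_nil /= lee_fin; lra.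
Qed.

Lemma hellinger_expfam_le (t1 t2 G : R) : (0 <= G)%R ->
  \int[mu]_(y in Y) ((Num.sqrt (p t1 y * G) - Num.sqrt (p t2 y * G)) ^+ 2)%:E <=
  (G * `|J t1 + J t2 - 2 * J ((t1 + t2) / 2)|)%:E.
Proof.
move=> G0; set D := (J ((t1 + t2) / 2) - (J t1 + J t2) / 2)%R.
pose s := [:: (G, t1); (G, t2); (- 2 * (G * expR D), (t1 + t2) / 2)]%R.
apply: le_trans (le_integral_mixture (s := s) _) _.
  move=> y Yy; rewrite /s !big_cons big_nil /= !expfam_densityMr.
  rewrite hellinger_integrand_eq ?mulr_ge0 ?h_ge0//.
  have -> : ((t1 * kappa y - J t1 + (t2 * kappa y - J t2)) / 2 =
             (t1 + t2) / 2 * kappa y - (J t1 + J t2) / 2)%R by ring.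
  rewrite (expfam_density_shift ((t1 + t2) / 2)) -!expfam_densityMr -/D.
  lra.
rewrite /s !big_cons big_nil /= lee_fin.
have := expR_ge1Dx D.
have : (- (2 * D) <= `|J t1 + J t2 - 2 * J ((t1 + t2) / 2)|)%R.
  by apply: le_trans (ler_norm _); rewrite /D; lra.
nra.
Qed.

End normalized_family.

Section log_partition_estimates.
Local Set Implicit Arguments.
Local Unset Strict Implicit.
Context {R : realType}.
Implicit Types (F zeta l : R -> R) (a b p q u v L K : R).

Lemma le_dist_between p q u v :
  Num.min p q <= u <= Num.max p q -> Num.min p q <= v <= Num.max p q ->
  `|u - v| <= `|p - q|.
Proof.
have [pq|qp] := leP p q.
- by rewrite (ler0_norm (x := p - q)) ?ler_norml; lra.
- by rewrite (ger0_norm (x := p - q)) ?ler_norml; lra.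
Qed.

Lemma ivt_between zeta p q u : continuous zeta ->
  Num.min (zeta p) (zeta q) <= u <= Num.max (zeta p) (zeta q) ->
  exists2 s, Num.min p q <= s <= Num.max p q & zeta s = u.
Proof.
wlog pq : p q / p <= q.
  move=> W; have /orP[/W//|/W] := le_total p q.
  rewrite [Num.min (zeta q) _]minC [Num.max (zeta q) _]maxC.
  by rewrite [Num.min q p]minC [Num.max q p]maxC.
move=> cz hu; have [s] := IVT pq (continuous_subspaceT cz) hu.
by rewrite in_itv /= => ps zs; exists s; rewrite ?(min_l pq) ?(max_r pq).
Qed.

Lemma lipschitz_pullback_between F zeta l L p q u v : continuous zeta ->
  (forall s, F (zeta s) = l s) -> (forall s1 s2, `|l s1 - l s2| <= L * `|s1 - s2|) ->
  0 <= L ->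
  Num.min (zeta p) (zeta q) <= u <= Num.max (zeta p) (zeta q) ->
  Num.min (zeta p) (zeta q) <= v <= Num.max (zeta p) (zeta q) ->
  `|F u - F v| <= L * `|p - q|.
Proof.
move=> cz Fzeta l_lip L0 /(ivt_between cz)[su su_pq <-] /(ivt_between cz)[sv sv_pq <-].
by rewrite !Fzeta (le_trans (l_lip _ _))// ler_wpM2l// le_dist_between.
Qed.

Lemma extrapolated_second_difference_le F a b L :
  (forall x, derivable F x 1) -> (forall x, derivable (derive1 F) x 1) ->
  (forall x, a - `|a - b| <= x <= a + `|a - b| -> `|derive1 (derive1 F) x| <= L) ->
  `|F (2 * a - b) - 2 * F a + F b| <= 2 * L * (a - b) ^+ 2.
Proof.
move=> dF ddF F2L.
have := @second_difference_le _ F a (a - b) (L * (2 * `|a - b|)) dF.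
have -> : a + (a - b) = 2 * a - b by ring.
have -> : a - (a - b) = b by ring.
rewrite (_ : F (2 * a - b) + F b - 2 * F a = F (2 * a - b) - 2 * F a + F b); last by ring.
rewrite -real_normK ?num_real// (_ : 2 * L * _ = L * (2 * `|a - b|) * `|a - b|); last by ring.
apply=> u v hu hv; apply: le_trans (lipschitz_on_segment ddF F2L hu hv) _.
have L0 : 0 <= L.
  by apply: le_trans (normr_ge0 _) (F2L a _); rewrite lerBlDr lerDl normr_ge0.
rewrite ler_wpM2l// ler_norml; apply/andP; split; lra.
Qed.

Lemma midpoint_second_difference_le F a b K : (forall x, derivable F x 1) ->
  (forall u v, Num.min a b <= u <= Num.max a b -> Num.min a b <= v <= Num.max a b ->
     `|derive1 F u - derive1 F v| <= K) ->
  `|F a + F b - 2 * F ((a + b) / 2)| <= K * `|a - b| / 2.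
Proof.
move=> dF FK.
have := @second_difference_le _ F ((a + b) / 2) ((a - b) / 2) K dF.
have -> : (a + b) / 2 + (a - b) / 2 = a by lra.
have -> : (a + b) / 2 - (a - b) / 2 = b by lra.
rewrite normrM (ger0_norm (_ : 0 <= 2^-1 :> R)) ?invr_ge0// mulrA.
have between x : (a + b) / 2 - `|a - b| * 2^-1 <= x <= (a + b) / 2 + `|a - b| * 2^-1 ->
    Num.min a b <= x <= Num.max a b.
  by have [ab|ba] := leP a b; [rewrite ler0_norm; lra|rewrite ger0_norm; lra].
by apply=> u v /between hu /between hv; exact: FK.
Qed.

Lemma lipschitz_image_ball zeta Mz B t :
  (forall u v, `|zeta u - zeta v| <= Mz * `|u - v|) -> 0 <= Mz ->
  `|t| <= B -> `|zeta t| <= `|zeta 0| + Mz * B.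
Proof.
move=> zeta_lip Mz0 tB; have := zeta_lip t 0; rewrite subr0 => zt.
have := ler_normD (zeta t - zeta 0) (zeta 0); rewrite subrK.
have : Mz * `|t| <= Mz * B by rewrite ler_wpM2l.
lra.
Qed.

Lemma kl_exponent_bound F zeta Mz B :
  (forall x, derivable F x 1) -> (forall x, derivable (derive1 F) x 1) ->
  continuous (derive1 (derive1 F)) ->
  (forall u v, `|zeta u - zeta v| <= Mz * `|u - v|) -> 0 <= Mz -> 0 <= B ->
  exists2 A, 0 <= A & forall t1 t2, `|t1| <= B -> `|t2| <= B ->
    expR (F (2 * zeta t1 - zeta t2) - 2 * F (zeta t1) + F (zeta t2)) - 1
      <= A * (t1 - t2) ^+ 2.
Proof.
move=> dF ddF cF2 zeta_lip Mz0 B0.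
set T := `|zeta 0| + Mz * B.
have zetaT t : `|t| <= B -> `|zeta t| <= T := lipschitz_image_ball zeta_lip Mz0.
have T0 : 0 <= 3 * T.
  by have := normr_ge0 (zeta 0); have := mulr_ge0 Mz0 B0; rewrite /T; lra.
(* The second difference at t1, t2 only evaluates F'' on [-3T, 3T]. *)
have [C [C0 F2C]] := bounded_on_segment cF2 T0.
set Q := 2 * C * Mz ^+ 2.
have Q0 : 0 <= Q by rewrite /Q !mulr_ge0 ?sqr_ge0.
exists (Q * expR (Q * (2 * B) ^+ 2)) => [|t1 t2 t1B t2B]; first by rewrite mulr_ge0 ?expR_ge0.
have dzeta : (zeta t1 - zeta t2) ^+ 2 <= Mz ^+ 2 * (t1 - t2) ^+ 2.
  rewrite -exprMn -[X in X <= _]real_normK ?num_real// -[X in _ <= X]real_normK ?num_real//.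
  by rewrite lerXn2r ?nnegrE ?normr_ge0// normrM (ger0_norm Mz0) zeta_lip.
have dt : (t1 - t2) ^+ 2 <= (2 * B) ^+ 2.
  by move: t1B t2B; rewrite !ler_norml => /andP[? ?] /andP[? ?]; nra.
have DQ : `|F (2 * zeta t1 - zeta t2) - 2 * F (zeta t1) + F (zeta t2)| <= Q * (t1 - t2) ^+ 2.
  apply: le_trans (extrapolated_second_difference_le (L := C) dF ddF _) _.
    move=> x /andP[xlo xhi]; apply: F2C.
    have d12 : `|zeta t1 - zeta t2| <= 2 * T.
      by apply: le_trans (ler_normB _ _) _; have := zetaT _ t1B; have := zetaT _ t2B; lra.
    have := zetaT _ t1B; rewrite ler_norml => /andP[lo1 hi1].
    by apply/andP; split; lra.
  by rewrite /Q -(mulrA (2 * C)) ler_wpM2l ?mulr_ge0.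
apply: le_trans (expR_sub1_le_norm (L := Q * (2 * B) ^+ 2) _) _.
  by apply: le_trans DQ _; rewrite ler_wpM2l.
by rewrite [Q * expR _ * _]mulrAC ler_wpM2r ?expR_ge0.
Qed.

Lemma hellinger_exponent_bound F zeta l Ml Mz :
  (forall x, derivable F x 1) -> continuous zeta ->
  (forall s, derive1 F (zeta s) = l s) ->
  (forall s1 s2, `|l s1 - l s2| <= Ml * `|s1 - s2|) -> 0 <= Ml ->
  (forall u v, `|zeta u - zeta v| <= Mz * `|u - v|) ->
  forall t1 t2, `|F (zeta t1) + F (zeta t2) - 2 * F ((zeta t1 + zeta t2) / 2)|
    <= Ml * Mz / 2 * (t1 - t2) ^+ 2.
Proof.
move=> dF cz Fzeta l_lip Ml0 zeta_lip t1 t2.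
apply: le_trans (midpoint_second_difference_le (K := Ml * `|t1 - t2|) dF _) _.
  by move=> u v hu hv; exact: lipschitz_pullback_between cz Fzeta l_lip Ml0 hu hv.
rewrite -real_normK ?num_real//.
rewrite (_ : Ml * Mz / 2 * _ = Ml * `|t1 - t2| * (Mz * `|t1 - t2|) / 2); last by ring.
by rewrite ler_wpM2r ?invr_ge0// ler_wpM2l ?mulr_ge0.
Qed.

End log_partition_estimates.

Section supnorm.
Local Set Implicit Arguments.
Local Unset Strict Implicit.
Context {R : realType} {d : measure_display} {X : measurableType d}.

Local Open Scope ereal_scope.

Lemma supnorm_ub (f1 f2 : X -> R) (s : R) :
  supnorm f1 f2 = s%:E -> forall x, (`|f1 x - f2 x| <= s)%R.
Proof. by move=> E x; rewrite -lee_fin -E; apply: ereal_sup_ubound; exists x. Qed.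

Lemma supnorm_le (f1 f2 : X -> R) (b : R) :
  (forall x, `|f1 x - f2 x| <= b)%R -> supnorm f1 f2 <= b%:E.
Proof. by move=> fb; apply: ge_ereal_sup => _ [x _ <-]; rewrite lee_fin. Qed.

Lemma le_mul_supnorm_sqr (f1 f2 : X -> R) (P : \bar R) (C : R) : (0 < C)%R ->
  (forall s : R, (0 <= s)%R -> (forall x, (f1 x - f2 x) ^+ 2 <= s ^+ 2)%R ->
     supnorm f1 f2 = s%:E -> P <= (C * s ^+ 2)%:E) ->
  P <= C%:E * (supnorm f1 f2 * supnorm f1 f2).
Proof.
move=> C0 HP; case E: (supnorm f1 f2) => [s| |].
- have s0 : (0 <= s)%R := le_trans (normr_ge0 _) (supnorm_ub E point).
  rewrite -EFinM -expr2; apply: HP => // x.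
  by rewrite -real_normK ?num_real// lerXn2r ?nnegrE ?supnorm_ub.
- by rewrite mulyy gt0_muley ?leey ?lte_fin.
- by rewrite mulNyNy gt0_muley ?leey ?lte_fin.
Qed.

End supnorm.

Section latent_model.
Local Set Implicit Arguments.
Local Unset Strict Implicit.
Context {R : realType} {d : measure_display} {X : measurableType d}.
Variables (V : {measure set X -> \bar R}) (g : X -> R).
Variables (mu : {measure set (measurableTypeR R) -> \bar R}) (Y : set R).
Variables (h kappa J zeta : R -> R).
Local Notation p := (expfam_density h kappa J).
Local Notation pi := (pi_f g h kappa J zeta).
Hypotheses (mg : measurable_fun setT g) (g_ge0 : forall x, 0 <= g x)
  (g_int1 : (\int[V]_x (g x)%:E = 1)%E)
  (mY : measurable (Y : set (measurableTypeR R))) (h_ge0 : forall y, Y y -> 0 <= h y)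
  (integrable_p : forall t, mu.-integrable Y (EFin \o p t))
  (integral_p : forall t, (\int[mu]_(y in Y) (p t y)%:E)%E = 1%E).

Local Notation kl_exponent f1 f2 x :=
  (J (2 * zeta (f1 x) - zeta (f2 x)) - 2 * J (zeta (f1 x)) + J (zeta (f2 x))).

Local Open Scope ereal_scope.

Lemma integral_density_scale (c : R) : (0 <= c)%R -> \int[V]_x (g x * c)%:E = c%:E.
Proof.
move=> c0; under eq_integral => x _ do rewrite EFinM muleC.
rewrite ge0_integralZl_EFin ?g_int1 ?mule1//; first by move=> x _; rewrite lee_fin.
exact/measurable_EFinP.
Qed.

Lemma le_integral_density (F : X -> \bar R) (c : R) : (0 <= c)%R ->
  (forall x, F x <= (g x * c)%:E) -> \int[V]_x F x <= c%:E.
Proof.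
move=> c0 Fc; rewrite -(integral_density_scale c0).
by apply: le_integral_any => x _; exact: Fc.
Qed.

Lemma kl_pi_le (f1 f2 : X -> R) (c : R) : (0 <= c)%R ->
  (forall x, expR (kl_exponent f1 f2 x) - 1 <= c)%R ->
  KLdiv V mu Y (pi f1) (pi f2) <= c%:E.
Proof.
move=> c0 Hc; apply: le_integral_density => // x.
apply: le_trans (kl_expfam_le mY h_ge0 integrable_p integral_p _ _ (g_ge0 x)) _.
by rewrite lee_fin ler_wpM2l.
Qed.

Lemma kl_pi_ge0 (f1 f2 : X -> R) : 0 <= KLdiv V mu Y (pi f1) (pi f2).
Proof.
apply: integral_ge0 => x _.
exact: (kl_expfam_ge0 mY h_ge0 integrable_p integral_p (zeta (f1 x)) (zeta (f2 x)) (g_ge0 x)).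
Qed.

Lemma v20_pi_le (f1 f2 : X -> R) (c : R) : (0 <= c)%R ->
  (forall x, 8 * (expR (kl_exponent f1 f2 x) - 1) +
             2 * fine (KLdiv V mu Y (pi f1) (pi f2)) ^+ 2 <= c)%R ->
  V20 V mu Y (pi f1) (pi f2) <= c%:E.
Proof.
move=> c0 Hc; apply: le_integral_density => // x.
apply: le_trans (v20_expfam_le mY h_ge0 integrable_p integral_p _ _ _ (g_ge0 x)) _.
by rewrite lee_fin ler_wpM2l.
Qed.

Lemma hellinger_pi_le (f1 f2 : X -> R) (c : R) : (0 <= c)%R ->
  (forall x, `|J (zeta (f1 x)) + J (zeta (f2 x))
               - 2 * J ((zeta (f1 x) + zeta (f2 x)) / 2)| <= c)%R ->
  hellinger2 V mu Y (pi f1) (pi f2) <= c%:E.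
Proof.
move=> c0 Hc; apply: le_integral_density => // x.
apply: le_trans (hellinger_expfam_le mY h_ge0 integrable_p integral_p _ _ (g_ge0 x)) _.
by rewrite lee_fin ler_wpM2l.
Qed.

Lemma kl_le_supnorm (f1 f2 : X -> R) (A : R) : (0 <= A)%R ->
  (forall x, expR (kl_exponent f1 f2 x) - 1 <= A * (f1 x - f2 x) ^+ 2)%R ->
  KLdiv V mu Y (pi f1) (pi f2) <= (A + 1)%:E * (supnorm f1 f2 * supnorm f1 f2).
Proof.
move=> A0 HA; apply: le_mul_supnorm_sqr => [|s s0 fs _]; first lra.
apply: kl_pi_le => [|x]; first by rewrite mulr_ge0 ?sqr_ge0 ?addr_ge0.
by apply: le_trans (HA x) (ler_pM A0 (sqr_ge0 _) _ (fs x)); lra.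
Qed.

Lemma v20_le_supnorm (f1 f2 : X -> R) (A b : R) : (0 <= A)%R ->
  (forall x, expR (kl_exponent f1 f2 x) - 1 <= A * (f1 x - f2 x) ^+ 2)%R ->
  (forall x, `|f1 x - f2 x| <= b)%R ->
  V20 V mu Y (pi f1) (pi f2) <=
    (8 * A + 2 * (A + 1) ^+ 2 * b ^+ 2 + 1)%:E * (supnorm f1 f2 * supnorm f1 f2).
Proof.
move=> A0 HA fb; have b0 : (0 <= b)%R := le_trans (normr_ge0 _) (fb point).
have C0 : (0 <= 2 * (A + 1) ^+ 2 * b ^+ 2)%R.
  by apply: mulr_ge0; [apply: mulr_ge0|]; rewrite ?sqr_ge0.
apply: le_mul_supnorm_sqr => [|s s0 fs Es]; first lra.
have sb : (s <= b)%R by rewrite -lee_fin -Es supnorm_le.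
have KL0 := kl_pi_ge0 f1 f2.
have KLs : KLdiv V mu Y (pi f1) (pi f2) <= ((A + 1) * s ^+ 2)%:E.
  by move: (kl_le_supnorm A0 HA); rewrite Es -EFinM -expr2.
set K := KLdiv _ _ _ _ _ in KL0 KLs *.
have Kfin : K \is a fin_num by rewrite ge0_fin_numE// (le_lt_trans KLs) ?ltry.
have K0 : (0 <= fine K)%R by rewrite -lee_fin fineK.
have Ks : (fine K <= (A + 1) * s ^+ 2)%R by rewrite -lee_fin fineK.
apply: v20_pi_le => [|x]; first by rewrite mulr_ge0 ?sqr_ge0//; lra.
have s2b : (s ^+ 2 <= b ^+ 2)%R by rewrite lerXn2r ?nnegrE.
have K2 : (fine K ^+ 2 <= (A + 1) ^+ 2 * b ^+ 2 * s ^+ 2)%R.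
  apply: (@le_trans _ _ ((A + 1) ^+ 2 * s ^+ 2 * s ^+ 2)%R).
    rewrite (_ : _ * s ^+ 2 * s ^+ 2 = ((A + 1) * s ^+ 2) ^+ 2)%R; last by ring.
    by rewrite lerXn2r ?nnegrE// (le_trans K0).
  by apply: ler_wpM2r; [exact: sqr_ge0|apply: ler_wpM2l; [exact: sqr_ge0|]].
have := HA x; have := ler_wpM2l A0 (fs x); have := sqr_ge0 s; lra.
Qed.

Lemma hellinger_le_supnorm (f1 f2 : X -> R) (A : R) : (0 <= A)%R ->
  (forall x, `|J (zeta (f1 x)) + J (zeta (f2 x))
               - 2 * J ((zeta (f1 x) + zeta (f2 x)) / 2)| <= A * (f1 x - f2 x) ^+ 2)%R ->
  hellinger2 V mu Y (pi f1) (pi f2) <= (A + 1)%:E * (supnorm f1 f2 * supnorm f1 f2).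
Proof.
move=> A0 HA; apply: le_mul_supnorm_sqr => [|s s0 fs _]; first lra.
apply: hellinger_pi_le => [|x]; first by rewrite mulr_ge0 ?sqr_ge0 ?addr_ge0.
by apply: le_trans (HA x) (ler_pM A0 (sqr_ge0 _) _ (fs x)); lra.
Qed.

End latent_model.

Theorem lemma7 (R : realType) (d : measure_display) (X : measurableType d)
  (V : {measure set X -> \bar R}) (g : X -> R)
  (Y : set R) (mu : {measure set (measurableTypeR R) -> \bar R})
  (h kappa l zeta : R -> R) :
  sigma_finite setT V ->
  measurable_fun setT g -> (forall x, 0 <= g x) ->
  (\int[V]_x (g x)%:E = 1)%E ->
  measurable Y ->
  ((forall A, mu A = lebesgue_measure A) \/ (forall A, mu A = counting A)) ->
  measurable_fun Y h -> measurable_fun Y kappa -> (forall y, Y y -> 0 <= h y) ->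
  (forall t : R, (0 < \int[mu]_(y in Y) (h y * expR (t * kappa y))%:E < +oo)%E) ->
  let J := Jfun mu Y h kappa in
  (* J in C^2(R) *)
  (forall t, derivable J t 1) -> (forall t, derivable (derive1 J) t 1) ->
  continuous (derive1 (derive1 J)) ->
  minimal_family mu Y h kappa ->
  injective (derive1 J) ->
  (* zeta = (J')^{-1} o l *)
  (forall t, derive1 J (zeta t) = l t) ->
  (* l, zeta are C^1 with uniformly bounded derivatives *)
  (forall t, derivable l t 1) -> continuous (derive1 l) ->
  (exists M : R, forall t, `|derive1 l t| <= M) ->
  (forall t, derivable zeta t 1) -> continuous (derive1 zeta) ->
  (exists M : R, forall t, `|derive1 zeta t| <= M) ->
  let pi := pi_f g h kappa J zeta in
  (forall Omega : set R, (exists B : R, forall t, Omega t -> `|t| <= B) ->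
     exists C4 C5 : R, 0 < C4 /\ 0 < C5 /\
       forall f1 f2 : X -> R, measurable_fun setT f1 -> measurable_fun setT f2 ->
         (forall x, Omega (f1 x)) -> (forall x, Omega (f2 x)) ->
         (KLdiv V mu Y (pi f1) (pi f2) <= C4%:E * (supnorm f1 f2 * supnorm f1 f2))%E /\
         (V20 V mu Y (pi f1) (pi f2) <= C5%:E * (supnorm f1 f2 * supnorm f1 f2))%E)
  /\
  (exists C6 : R, 0 < C6 /\
     forall f1 f2 : X -> R, measurable_fun setT f1 -> measurable_fun setT f2 ->
       (hellinger2 V mu Y (pi f1) (pi f2) <= C6%:E * (supnorm f1 f2 * supnorm f1 f2))%E).
Proof.
move=> _ mg g0 g1 mY _ mh mk h0 fin J dJ ddJ cJ2 _ _ Jzeta dl _ [Ml HMl] dz _ [Mz HMz] pi.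
have ip := integrable_expfam_density mY mh mk h0 fin.
have Ip := integral_expfam_density mY mh mk h0 fin.
have Ml0 : 0 <= Ml := le_trans (normr_ge0 _) (HMl 0).
have Mz0 : 0 <= Mz := le_trans (normr_ge0 _) (HMz 0).
have l_lip := lipschitz_derive1_bounded dl HMl.
have zeta_lip := lipschitz_derive1_bounded dz HMz.
have cz : continuous zeta.
  by move=> t; apply: differentiable_continuous; exact/derivable1_diffP.
split.
  move=> Omega [B OB]; have {}OB t : Omega t -> `|t| <= `|B|.
    by move=> /OB tB; apply: le_trans tB (ler_norm B).
  have [A A0 HA] := kl_exponent_bound dJ ddJ cJ2 zeta_lip Mz0 (normr_ge0 B).
  exists (A + 1), (8 * A + 2 * (A + 1) ^+ 2 * (2 * `|B|) ^+ 2 + 1).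
  split; first lra.
  split; first by have := sqr_ge0 (2 * `|B|); have := sqr_ge0 (A + 1); nra.
  move=> f1 f2 _ _ O1 O2; have HAx x := HA _ _ (OB _ (O1 x)) (OB _ (O2 x)).
  split; first exact (kl_le_supnorm mg g0 g1 mY h0 ip Ip A0 HAx).
  refine (v20_le_supnorm mg g0 g1 mY h0 ip Ip A0 HAx _) => x.
  by apply: le_trans (ler_normB _ _) _; have := OB _ (O1 x); have := OB _ (O2 x); lra.
have C0 : 0 <= Ml * Mz / 2 by rewrite divr_ge0 ?mulr_ge0.
exists (Ml * Mz / 2 + 1); split; first lra.
move=> f1 f2 _ _; refine (hellinger_le_supnorm mg g0 g1 mY h0 ip Ip C0 _) => x.
exact: hellinger_exponent_bound dJ cz Jzeta l_lip Ml0 zeta_lip (f1 x) (f2 x).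
Qed.
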